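(* Let $\Bbbk$ be a field of characteristic zero and let $n,d$ be integers with $n \geq 5, d \geq 4$, or $n\geq 6, d\geq 3$, or $n \geq 7, d \geq 2$. Let $S=\Bbbk[x_1,\ldots,x_n]$. Then there exists an artinian monomial ideal $I\subset S$ minimally generated by $2n-2$ elements of degree $d$ such that $S/I$ fails the WLP in degree $2d-2$.
   Context: For a monomial ideal $I$, $A=S/I$ fails the WLP in degree $i$ if $\times(x_1+\cdots+x_n): A_i\to A_{i+1}$ is neither injective nor surjective. *)

From HB Require Import structures.
From mathcomp Require Import all_boot all_order all_algebra.
From mathcomp Require Import mpoly.
Set Implicit Arguments. Unset Strict Implicit. Unset Printing Implicit Defensive.
Import Order.TTheory GRing.Theory.
Local Open Scope ring_scope.

Section MonomialIdeals.
Variables (F : fieldType) (n : nat).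

Definition in_mon_ideal (gens : seq 'X_{1..n}) (f : {mpoly F[n]}) : Prop :=
  exists q : seq {mpoly F[n]},
    f = \sum_(j < size gens) q`_j * 'X_[nth 0%MM gens j].

Definition drop_at (T : Type) (s : seq T) (j : nat) : seq T :=
  take j s ++ drop j.+1 s.

Definition minimal_gens (gens : seq 'X_{1..n}) : Prop :=
  forall j : 'I_(size gens), ~ in_mon_ideal (drop_at gens j) 'X_[nth 0%MM gens j].

(* S/I is artinian: I contains a power of the maximal ideal (x_1,..,x_n),
   i.e. all monomials of large degree. *)
Definition artinian_quot (gens : seq 'X_{1..n}) : Prop :=
  exists N : nat, forall m : 'X_{1..n}, (N <= mdeg m)%N ->
    in_mon_ideal gens 'X_[m].

Definition lin_form : {mpoly F[n]} := \sum_(i < n) 'X_i.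

(* x l : A_i -> A_{i+1} injective, A = S/I, A_i = S_i/I_i *)
Definition mult_injective_in (gens : seq 'X_{1..n}) (i : nat) : Prop :=
  forall f : {mpoly F[n]}, f \is i.-homog ->
    in_mon_ideal gens (lin_form * f) -> in_mon_ideal gens f.

(* x l : A_i -> A_{i+1} surjective *)
Definition mult_surjective_in (gens : seq 'X_{1..n}) (i : nat) : Prop :=
  forall g : {mpoly F[n]}, g \is i.+1.-homog ->
    exists2 f : {mpoly F[n]}, f \is i.-homog &
      in_mon_ideal gens (g - lin_form * f).

Definition fails_WLP_in (gens : seq 'X_{1..n}) (i : nat) : Prop :=
  ~ mult_injective_in gens i /\ ~ mult_surjective_in gens i.

End MonomialIdeals.

From HB Require Import structures.
From mathcomp Require Import all_boot all_order all_algebra.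
From mathcomp Require Import mpoly.
From mathcomp Require Import zify.
Set Implicit Arguments. Unset Strict Implicit. Unset Printing Implicit Defensive.
Import Order.TTheory GRing.Theory.
Local Open Scope ring_scope.

(* I is generated by the x_i^d, by x_a^(d-1) x_b and by the x_j x_z^(d-1) with j
   outside {a, b, z}: 2n-2 distinct monomials of degree d. The monomial
   x_a^(d-1) x_z^(d-1) is not in I but all its multiples by variables are, so
   multiplication by l = x_1 + ... + x_n is not injective in degree 2d-2.
   Surjectivity fails by Macaulay duality: for the pairing <P, X^M> = M! P_M,
   multiplication by x_i is adjoint to d/dx_i, so a nonzero form P of degree 2d-1
   with sum_i dP/dx_i = 0 and all of its monomials outside I is orthogonal to
   I + l S_(2d-2), while in characteristic zero it pairs nontrivially with each of
   its own monomials. Products of powers of differences x_i - x_j are killed by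
   sum_i d/dx_i, and the bounds on n and d are what let such a product of degree
   2d-1 avoid I: (x_1-x_2)^(d-1) (x_3-x_4)^(d-2) (x_3-x_5) (x_4-x_5) when n >= 5,
   d >= 4, and (x_1-x_2)^(d-1) (x_3-x_4)^(d-1) (x_5-x_6) otherwise, with z = x_n. *)

Section MonomialIdeal.
Variables (F : fieldType) (n : nat).
Implicit Types (gens : seq 'X_{1..n}) (f q : {mpoly F[n]}) (M gm : 'X_{1..n}).

Definition divisible_by_gen gens M := has (fun gm => gm <= M)%MM gens.

Lemma in_mon_idealP gens f :
  in_mon_ideal gens f <-> exists q : 'I_(size gens) -> {mpoly F[n]},
    f = \sum_(j < size gens) q j * 'X_[nth 0%MM gens j].
Proof.
split=> [[q ->]|[q ->]]; first by exists (fun j => q`_j).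
exists [seq q j | j <- enum 'I_(size gens)]; apply: eq_bigr => j _.
by rewrite (nth_map j) ?size_enum_ord // nth_ord_enum.
Qed.

Lemma in_mon_ideal0 gens : in_mon_ideal gens (0 : {mpoly F[n]}).
Proof.
by apply/in_mon_idealP; exists (fun _ => 0); rewrite big1 // => j _; rewrite mul0r.
Qed.

Lemma in_mon_idealD gens f q :
  in_mon_ideal gens f -> in_mon_ideal gens q -> in_mon_ideal gens (f + q).
Proof.
move=> /in_mon_idealP[q1 ->] /in_mon_idealP[q2 ->]; apply/in_mon_idealP.
exists (fun j => q1 j + q2 j); rewrite -big_split.
by apply: eq_bigr => j _; rewrite mulrDl.
Qed.

Lemma in_mon_ideal_sum gens (I : Type) (r : seq I) (P : pred I) (f : I -> {mpoly F[n]}) :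
  (forall i, P i -> in_mon_ideal gens (f i)) ->
  in_mon_ideal gens (\sum_(i <- r | P i) f i).
Proof.
move=> If; elim/big_rec: _ => [|i g Pi Ig]; first exact: in_mon_ideal0.
exact/in_mon_idealD/Ig/If.
Qed.

Lemma in_mon_idealX gens gm M :
  gm \in gens -> (gm <= M)%MM -> in_mon_ideal gens 'X_[F, M].
Proof.
move=> gm_in gm_le; apply/in_mon_idealP.
have j_lt : (index gm gens < size gens)%N by rewrite index_mem.
pose j0 : 'I_(size gens) := Ordinal j_lt.
exists (fun j => if j == j0 then 'X_[M - gm] else 0).
rewrite (bigD1 j0) //= eqxx big1 ?addr0 => [|j /negPf ->]; last by rewrite mul0r.
by rewrite nth_index // -mpolyXD submK.
Qed.

Lemma mcoeffMX_eq0 q gm M : ~~ (gm <= M)%MM -> (q * 'X_[gm])@_M = 0.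
Proof.
move=> gm_nle; apply/eqP; rewrite mcoeff_eq0 (perm_mem (msuppMX q gm)).
by apply: contra gm_nle => /mapP[M' _ ->]; rewrite lem_addr.
Qed.

Lemma mcoeff_mon_ideal gens f M :
  in_mon_ideal gens f -> ~~ divisible_by_gen gens M -> f@_M = 0.
Proof.
move=> /in_mon_idealP[q ->] /hasPn ndiv; rewrite raddf_sum big1 // => j _.
exact/mcoeffMX_eq0/ndiv/mem_nth.
Qed.

Lemma in_mon_idealXP gens M :
  in_mon_ideal gens 'X_[F, M] <-> divisible_by_gen gens M.
Proof.
split=> [IM|/hasP[gm gm_in gm_le]]; last exact: in_mon_idealX gm_in gm_le.
apply: contraPT IM => /(mcoeff_mon_ideal (f := 'X_[M])) coef0 IM.
by move: (coef0 IM); rewrite mcoeffX eqxx => /eqP; rewrite oner_eq0.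
Qed.

Lemma lem_mdeg_eq M gm : (gm <= M)%MM -> mdeg gm = mdeg M -> gm = M.
Proof.
move=> gm_le deg_eq; rewrite -(submK gm_le).
have /eqP : mdeg (M - gm)%MM = 0%N by move: (congr1 mdeg (submK gm_le)); rewrite mdegD; lia.
by rewrite mdeg_eq0 => /eqP ->; rewrite add0m.
Qed.

Lemma drop_at_rem (T : eqType) (x0 : T) (s : seq T) j :
  uniq s -> (j < size s)%N -> drop_at s j = rem (nth x0 s j) s.
Proof. by move=> s_uniq j_lt; rewrite remE index_uniq. Qed.

Lemma minimal_gens_homog gens d :
  uniq gens -> all (fun m => mdeg m == d) gens -> minimal_gens F gens.
Proof.
move=> gens_uniq /allP deg_gens j /in_mon_idealXP /hasP[gm].
rewrite (drop_at_rem 0%MM) // mem_rem_uniq // => /andP[/= gm_neq gm_in] gm_le.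
have gj_in : nth 0%MM gens j \in gens by apply: mem_nth.
move: (deg_gens _ gm_in) (deg_gens _ gj_in) => /eqP dgm /eqP dgj.
by move: gm_neq; rewrite (lem_mdeg_eq gm_le) ?eqxx // dgm dgj.
Qed.

Lemma artinian_pure_powers gens d :
  (forall i, U_(i) *+ d \in gens)%MM -> artinian_quot F gens.
Proof.
move=> pow_in; exists (n * d.-1).+1 => M deg_M; apply/in_mon_idealXP.
have [/existsP[i d_le]|] := boolP [exists i, d <= M i]%N.
  apply/hasP; exists (U_(i) *+ d)%MM => //; apply/mnm_lepP => k.
  by rewrite mulmnE mnm1E; case: eqP => [<-|_]; rewrite ?mul1n ?mul0n.
rewrite negb_exists => /forallP small; suff: (mdeg M <= n * d.-1)%N by lia.
rewrite mdegE; apply: (@leq_trans (\sum_(i < n) d.-1)%N).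
  by apply: leq_sum => i _; move: (small i); lia.
by rewrite sum_nat_const card_ord.
Qed.

End MonomialIdeal.

Lemma socle_not_injective (F : fieldType) n (gens : seq 'X_{1..n}) M :
  ~~ divisible_by_gen gens M -> (forall i, divisible_by_gen gens (M + U_(i))%MM) ->
  ~ mult_injective_in F gens (mdeg M).
Proof.
move=> M_ndiv MU_div inj.
have homM : 'X_[F, M] \is (mdeg M).-homog by rewrite dhomogX.
have : in_mon_ideal gens (lin_form F n * 'X_[M]).
  rewrite /lin_form mulr_suml; apply: in_mon_ideal_sum => i _.
  by rewrite -mpolyXD addmC; apply/in_mon_idealXP.
by move/(inj _ homM)/in_mon_idealXP; apply/negP.
Qed.

Section Apolarity.
Variables (F : fieldType) (n : nat).
Implicit Types (P f h : {mpoly F[n]}) (M : 'X_{1..n}).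

Definition mfact M := (\prod_(i < n) (M i)`!)%N.

Lemma mfact_gt0 M : (0 < mfact M)%N.
Proof. by rewrite prodn_gt0 // => i; exact: fact_gt0. Qed.

Lemma mfactDU M i : mfact (M + U_(i))%MM = (mfact M * (M i).+1)%N.
Proof.
rewrite /mfact (bigD1 i) //= [in RHS](bigD1 i) //= mnmDE mnm1E eqxx addn1 factS.
rewrite [RHS]mulnC mulnA; congr (_ * _)%N.
by apply: eq_bigr => j /negPf ji; rewrite mnmDE mnm1E eq_sym ji addn0.
Qed.

(* The adjoint of multiplication by [lin_form] for the pairing [apolar] below. *)
Definition diag_deriv P := \sum_(i < n) P^`M(i).

Lemma diag_deriv1 : diag_deriv 1 = 0.
Proof. by rewrite /diag_deriv big1 // => i _; exact: (mderivC i 1). Qed.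

Lemma diag_derivX i : diag_deriv 'X_i = 1.
Proof.
rewrite /diag_deriv (bigD1 i) //= big1 ?addr0 => [|j /negPf ji].
  by rewrite mderivX mnm1E eqxx -{1}[U_(i)%MM]add0m addmK mpolyX0 scale1r.
by rewrite mderivX mnm1E eq_sym ji scale0r.
Qed.

Lemma diag_derivM P f : diag_deriv (P * f) = diag_deriv P * f + P * diag_deriv f.
Proof.
rewrite /diag_deriv mulr_suml mulr_sumr -big_split.
by apply: eq_bigr => i _; rewrite mderivM.
Qed.

Lemma diag_deriv_XB i j : diag_deriv ('X_i - 'X_j) = 0.
Proof.
rewrite /diag_deriv; under eq_bigr do rewrite mderivB.
by rewrite sumrB -!/(diag_deriv _) !diag_derivX subrr.
Qed.

Definition apolar P h := \sum_(M <- msupp P) (mfact M)%:R * P@_M * h@_M.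

Lemma apolar0 P : apolar P 0 = 0.
Proof. by rewrite /apolar big1 // => M _; rewrite mcoeff0 mulr0. Qed.

Lemma apolarD P h1 h2 : apolar P (h1 + h2) = apolar P h1 + apolar P h2.
Proof. by rewrite /apolar -big_split; apply: eq_bigr => M _; rewrite mcoeffD mulrDr. Qed.

Lemma apolarB P h1 h2 : apolar P (h1 - h2) = apolar P h1 - apolar P h2.
Proof. by rewrite /apolar -sumrB; apply: eq_bigr => M _; rewrite mcoeffB mulrBr. Qed.

Lemma apolarZ P c h : apolar P (c *: h) = c * apolar P h.
Proof. by rewrite /apolar mulr_sumr; apply: eq_bigr => M _; rewrite mcoeffZ mulrCA. Qed.

Lemma apolar_sum P (I : Type) (r : seq I) (Q : pred I) (h : I -> {mpoly F[n]}) :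
  apolar P (\sum_(i <- r | Q i) h i) = \sum_(i <- r | Q i) apolar P (h i).
Proof. exact: (big_morph (apolar P) (apolarD P) (apolar0 P)). Qed.

Lemma apolarX P M : apolar P 'X_[M] = (mfact M)%:R * P@_M.
Proof.
have [M_in|M_nin] := boolP (M \in msupp P).
  rewrite /apolar (bigD1_seq M) ?msupp_uniq //= mcoeffX eqxx mulr1 big1 ?addr0 //.
  by move=> M' /negPf; rewrite mcoeffX eq_sym => ->; rewrite mulr0.
move: (M_nin); rewrite -mcoeff_eq0 => /eqP ->; rewrite mulr0 /apolar big_seq big1 //.
by move=> M' M'_in; rewrite mcoeffX (negPf (memPnC M_nin _ M'_in)) mulr0.
Qed.

Lemma apolar_lin_formX P M :
  apolar P (lin_form F n * 'X_[M]) = (mfact M)%:R * (diag_deriv P)@_M.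
Proof.
rewrite /lin_form mulr_suml apolar_sum /diag_deriv raddf_sum mulr_sumr.
apply: eq_bigr => i _; rewrite -mpolyXD apolarX addmC mfactDU /= mcoeff_deriv.
by rewrite natrM -mulrA; congr (_ * _); exact: mulr_natl.
Qed.

Lemma apolar_lin_form P f : diag_deriv P = 0 -> apolar P (lin_form F n * f) = 0.
Proof.
move=> DP0; rewrite (mpolyE f) mulr_sumr apolar_sum big1 // => M _.
by rewrite -scalerAr apolarZ apolar_lin_formX DP0 mcoeff0 !mulr0.
Qed.

Lemma apolar_mon_ideal P gens h :
  {in msupp P, forall M, ~~ divisible_by_gen gens M} ->
  in_mon_ideal gens h -> apolar P h = 0.
Proof.
move=> suppP Ih; rewrite /apolar big_seq big1 // => M /suppP M_ndiv.
by rewrite (mcoeff_mon_ideal Ih M_ndiv) mulr0.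
Qed.

Definition apolar_witness gens i P :=
  [/\ P \is i.+1.-homog, P != 0, diag_deriv P = 0 &
      {in msupp P, forall M, ~~ divisible_by_gen gens M}].

Lemma apolar_not_surjective gens i P :
  [pchar F] =i pred0 -> apolar_witness gens i P -> ~ mult_surjective_in F gens i.
Proof.
move=> char0 [homP P_neq0 DP0 suppP] surj.
have M0_in := mlead_supp P_neq0; set M0 := mlead P in M0_in.
have homM0 : 'X_[F, M0] \is i.+1.-homog by rewrite dhomogX (dhomog_mf homP M0_in).
have [f _ If] := surj _ homM0.
move: (apolar_mon_ideal suppP If) => /eqP.
rewrite apolarB apolar_lin_form // subr0 apolarX mulf_eq0 (pcharf0P _).1 //.
by rewrite eqn0Ngt mfact_gt0 /= mcoeff_eq0 M0_in.
Qed.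

End Apolarity.

Section WeightedDegree.
Variable n : nat.
Implicit Types (w : 'I_n -> nat) (M : 'X_{1..n}).
Local Open Scope nat_scope.

Definition wdeg w M := \sum_i w i * M i.

Lemma wdeg0 w : wdeg w 0%MM = 0.
Proof. by rewrite /wdeg big1 // => i _; rewrite mnm0E muln0. Qed.

Lemma wdegD w M1 M2 : wdeg w (M1 + M2)%MM = wdeg w M1 + wdeg w M2.
Proof. by rewrite /wdeg -big_split; apply: eq_bigr => i _; rewrite mnmDE mulnDr. Qed.

Lemma wdegU w i : wdeg w U_(i)%MM = w i.
Proof.
rewrite /wdeg (bigD1 i) //= mnm1E eqxx muln1 big1 ?addn0 // => j /negPf ji.
by rewrite mnm1E eq_sym ji muln0.
Qed.

Lemma wdeg_mem (A : seq 'I_n) M :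
  uniq A -> wdeg (fun j => j \in A) M = \sum_(i <- A) M i.
Proof.
move=> A_uniq; rewrite /wdeg (big_uniq _ A_uniq) [RHS]big_mkcond /=.
by apply: eq_bigr => i _; case: (i \in A); rewrite ?mul1n ?mul0n.
Qed.

Variable R : nzRingType.
Implicit Types (p q : {mpoly R[n]}).

Lemma wdeg_msuppM w k1 k2 p q :
  {in msupp p, forall M, wdeg w M <= k1} -> {in msupp q, forall M, wdeg w M <= k2} ->
  {in msupp (p * q), forall M, wdeg w M <= k1 + k2}.
Proof.
move=> le_p le_q M /msuppM_le /allpairsP[[M1 M2] /= [M1_in M2_in ->]].
by rewrite wdegD leq_add ?le_p ?le_q.
Qed.

Lemma wdeg_msuppX w k p e :
  {in msupp p, forall M, wdeg w M <= k} -> {in msupp (p ^+ e), forall M, wdeg w M <= k * e}.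
Proof.
move=> le_p; elim: e => [|e IH]; last by rewrite exprS mulnS; apply: wdeg_msuppM.
by rewrite expr0 muln0 => M; rewrite msupp1 inE => /eqP ->; rewrite wdeg0.
Qed.

Lemma wdeg_msuppXB w i j :
  {in msupp ('X_i - 'X_j : {mpoly R[n]}), forall M, wdeg w M <= maxn (w i) (w j)}.
Proof.
move=> M /msuppB_le; rewrite mem_cat !msuppX !inE.
by case/orP=> /eqP ->; rewrite wdegU ?leq_maxl ?leq_maxr.
Qed.

End WeightedDegree.

Section DifferenceProducts.
Variables (F : fieldType) (n : nat).
Implicit Types (s : seq ('I_n * 'I_n * nat)).

Definition diff_prod s : {mpoly F[n]} := \prod_(t <- s) ('X_t.1.1 - 'X_t.1.2) ^+ t.2.

Lemma dhomogXB i j : ('X_i - 'X_j : {mpoly F[n]}) \is 1.-homog.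
Proof. by rewrite rpredB // dhomogX /= mdeg1. Qed.

Lemma diff_prod_homog s : diff_prod s \is (\sum_(t <- s) t.2)%N.-homog.
Proof.
elim: s => [|t s IH]; first by rewrite /diff_prod !big_nil dhomog1.
rewrite /diff_prod !big_cons; apply: dhomogM IH.
by have := dhomogMn t.2 (dhomogXB t.1.1 t.1.2); rewrite mul1n.
Qed.

Lemma diff_prod_neq0 s : all (fun t => t.1.1 != t.1.2) s -> diff_prod s != 0.
Proof.
move=> /allP s_neq; rewrite prodf_seq_neq0; apply/allP => t /s_neq ij /=.
rewrite expf_neq0 //; apply: contra ij => /eqP /(congr1 (mcoeff U_(t.1.1))).
rewrite mcoeffB !mcoeffX eqxx mcoeff0.
case: eqP => [/mnmP/(_ t.1.1)|_]; first by rewrite !mnm1E eqxx eq_sym; case: eqP.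
by rewrite subr0 => /eqP; rewrite oner_eq0.
Qed.

Lemma diag_deriv_diff_prod s : diag_deriv (diff_prod s) = 0.
Proof.
apply: (big_ind (fun p => diag_deriv p = 0)) => [|p q Dp Dq|t _]; first exact: diag_deriv1.
  by rewrite diag_derivM Dp Dq mul0r mulr0 addr0.
elim: t.2 => [|e IH]; first by rewrite expr0 diag_deriv1.
by rewrite exprS diag_derivM diag_deriv_XB IH mul0r mulr0 addr0.
Qed.

Lemma wdeg_diff_prod s w :
  {in msupp (diff_prod s), forall M,
    wdeg w M <= \sum_(t <- s) maxn (w t.1.1) (w t.1.2) * t.2}%N.
Proof.
elim: s => [|t s IH]; rewrite /diff_prod ?big_nil ?big_cons.
  by move=> M; rewrite msupp1 inE => /eqP ->; rewrite wdeg0.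
by apply: wdeg_msuppM IH; apply/wdeg_msuppX/wdeg_msuppXB.
Qed.

Definition diff_prod_deg (A : seq 'I_n) s :=
  (\sum_(t <- s) maxn (t.1.1 \in A) (t.1.2 \in A) * t.2)%N.

Lemma msupp_diff_prod_deg s (A : seq 'I_n) M :
  uniq A -> M \in msupp (diff_prod s) -> (\sum_(i <- A) M i <= diff_prod_deg A s)%N.
Proof. by move=> A_uniq /(wdeg_diff_prod (fun j => j \in A)); rewrite wdeg_mem. Qed.

End DifferenceProducts.

Section WLPGenerators.
Variables (n d : nat) (a b z : 'I_n).
Hypotheses (d_ge2 : (2 <= d)%N) (ab : a != b) (az : a != z) (bz : b != z).
Implicit Types (M gm : 'X_{1..n}).
Local Open Scope nat_scope.

Definition wlp_gens : seq 'X_{1..n} :=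
  [seq (U_(i) *+ d)%MM | i <- enum 'I_n] ++ (U_(a) *+ d.-1 + U_(b))%MM ::
  [seq (U_(j) + U_(z) *+ d.-1)%MM | j <- enum [predC [:: a; b; z]]].

Lemma pure_power_wlp_gens i : (U_(i) *+ d)%MM \in wlp_gens.
Proof. by rewrite mem_cat (map_f (fun i => U_(i) *+ d)%MM) ?mem_enum. Qed.

Lemma mixed_wlp_gens : (U_(a) *+ d.-1 + U_(b))%MM \in wlp_gens.
Proof. by rewrite mem_cat inE eqxx orbT. Qed.

Lemma outer_wlp_gens j : j \notin [:: a; b; z] -> (U_(j) + U_(z) *+ d.-1)%MM \in wlp_gens.
Proof.
move=> j_out; rewrite mem_cat inE (map_f (fun j => U_(j) + U_(z) *+ d.-1)%MM) ?orbT //.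
by rewrite mem_enum.
Qed.

Lemma wlp_gensP gm : gm \in wlp_gens ->
  [\/ exists i, gm = (U_(i) *+ d)%MM, gm = (U_(a) *+ d.-1 + U_(b))%MM |
     exists2 j, j \notin [:: a; b; z] & gm = (U_(j) + U_(z) *+ d.-1)%MM].
Proof.
rewrite mem_cat inE => /orP[/mapP[i _ ->]|/orP[/eqP->|/mapP[j]]].
- by apply: Or31; exists i.
- exact: Or32.
- by rewrite mem_enum => j_out ->; apply: Or33; exists j.
Qed.

Lemma notin_abz j : j \notin [:: a; b; z] ->
  [/\ (j == a) = false, (j == b) = false & (j == z) = false].
Proof. by rewrite !inE; case: (j == a); case: (j == b); case: (j == z). Qed.

Lemma wlp_gens_not_divisible M :
  (forall i, M i < d) -> (M a < d.-1) || (M b == 0) ->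
  (forall j, j \notin [:: a; b; z] -> (M j == 0) || (M z < d.-1)) ->
  ~~ divisible_by_gen wlp_gens M.
Proof.
move=> M_lt Mab Mz; apply/hasPn => gm /wlp_gensP[[i ->]|->|[j j_out ->]];
  apply/negP => /mnm_lepP le_M.
- by move: (le_M i) (M_lt i); rewrite mulmnE mnm1E eqxx; lia.
- move: (le_M a) (le_M b) Mab; rewrite !mnmDE !mulmnE !mnm1E !eqxx (negPf ab) eq_sym (negPf ab).
  lia.
- have [ja jb jz] := notin_abz j_out.
  move: (le_M j) (le_M z) (Mz j j_out); rewrite !mnmDE !mulmnE !mnm1E !eqxx jz eq_sym jz.
  lia.
Qed.

Lemma size_wlp_gens : size wlp_gens = 2 * n - 2.
Proof.
rewrite size_cat size_map size_enum_ord /= size_map -cardE.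
have abz_uniq : uniq [:: a; b; z] by rewrite /= !inE negb_or ab az bz.
have := cardC (mem [:: a; b; z]).
by rewrite (card_uniqP abz_uniq) card_ord (@eq_card _ _ [predC [:: a; b; z]]) //=; lia.
Qed.

Lemma uniq_wlp_gens : uniq wlp_gens.
Proof.
rewrite cat_uniq /= !negb_or -!andbA; apply/and5P; split.
- rewrite map_inj_uniq ?enum_uniq // => i j /mnmP /(_ i).
  by rewrite !mulmnE !mnm1E eqxx; case: eqP => // _; lia.
- apply/mapP => [[i _ /mnmP /(_ b)]]; rewrite !mnmDE !mulmnE !mnm1E eqxx (negPf ab).
  by case: eqP => _; lia.
- apply/hasPn => gm /mapP[j]; rewrite mem_enum => /notin_abz[ja jb jz] -> {gm}.
  apply/mapP => [[i _ /mnmP /(_ j)]]; rewrite !mnmDE !mulmnE !mnm1E eqxx eq_sym jz.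
  by case: eqP => _; lia.
- apply/mapP => [[j]]; rewrite mem_enum => /notin_abz[ja jb jz] /mnmP /(_ b).
  by rewrite !mnmDE !mulmnE !mnm1E eqxx (negPf ab) jb (eq_sym z b) (negPf bz); lia.
- rewrite map_inj_in_uniq ?enum_uniq // => i j.
  rewrite !mem_enum => /notin_abz[_ _ iz] /notin_abz[_ _ jz] /mnmP /(_ i).
  by rewrite !mnmDE !mulmnE !mnm1E eqxx eq_sym iz; case: eqP => // _; lia.
Qed.

Lemma mdeg_wlp_gens : all (fun m => mdeg m == d) wlp_gens.
Proof.
apply/allP => gm /wlp_gensP[[i ->]|->|[j _ ->]];
  by rewrite ?mdegD ?mdegMn ?mdeg1; apply/eqP; lia.
Qed.

Lemma wlp_gens_not_injective (F : fieldType) : ~ mult_injective_in F wlp_gens (2 * d - 2).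
Proof.
pose M0 := (U_(a) *+ d.-1 + U_(z) *+ d.-1)%MM.
have -> : 2 * d - 2 = mdeg M0 by rewrite mdegD !mdegMn !mdeg1; lia.
have M0E k : M0 k = ((a == k) + (z == k)) * d.-1 by rewrite mnmDE !mulmnE !mnm1E mulnDl.
apply: socle_not_injective.
  apply: wlp_gens_not_divisible => [i||j /notin_abz[ja _ jz]]; rewrite !M0E.
  - have [<-|_] := eqVneq a i; first by rewrite eq_sym (negPf az); lia.
    by case: (z == i); lia.
  - by rewrite (negPf ab) (eq_sym z b) (negPf bz) orbT.
  - by rewrite (eq_sym a) ja (eq_sym z) jz.
have M0Ue i k : (M0 + U_(i))%MM k = ((a == k) + (z == k)) * d.-1 + (i == k).
  by rewrite mnmDE M0E mnm1E.
move=> i; apply/hasP.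
have [->|ia] := eqVneq i a.
  exists (U_(a) *+ d)%MM; rewrite ?pure_power_wlp_gens //; apply/mnm_lepP => k.
  by rewrite M0Ue mulmnE mnm1E; case: eqP; lia.
have [->|iz] := eqVneq i z.
  exists (U_(z) *+ d)%MM; rewrite ?pure_power_wlp_gens //; apply/mnm_lepP => k.
  by rewrite M0Ue mulmnE mnm1E; case: eqP; lia.
have [->|ib] := eqVneq i b.
  exists (U_(a) *+ d.-1 + U_(b))%MM; rewrite ?mixed_wlp_gens //; apply/mnm_lepP => k.
  by rewrite M0Ue mnmDE mulmnE !mnm1E; case: (a == k); case: (b == k); lia.
have i_out : i \notin [:: a; b; z] by rewrite !inE (negPf ia) (negPf ib) (negPf iz).
exists (U_(i) + U_(z) *+ d.-1)%MM; rewrite ?outer_wlp_gens //; apply/mnm_lepP => k.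
by rewrite M0Ue mnmDE mulmnE !mnm1E; case: (i == k); case: (z == k); lia.
Qed.

Lemma diff_prod_apolar_witness (F : fieldType) (s : seq ('I_n * 'I_n * nat)) :
  all (fun t => t.1.1 != t.1.2) s -> \sum_(t <- s) t.2 = (2 * d - 2).+1 ->
  (forall i, diff_prod_deg [:: i] s < d) -> diff_prod_deg [:: a; b] s < d ->
  diff_prod_deg [:: z] s < d.-1 ->
  apolar_witness wlp_gens (2 * d - 2) (diff_prod F s).
Proof.
move=> s_neq deg_s deg_i deg_ab deg_z; split.
- by rewrite -deg_s diff_prod_homog.
- exact: diff_prod_neq0.
- exact: diag_deriv_diff_prod.
move=> M M_in; have bound A : uniq A -> \sum_(i <- A) M i <= diff_prod_deg A s.
  by move=> A_uniq; exact: msupp_diff_prod_deg A_uniq M_in.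
apply: wlp_gens_not_divisible => [i||j _].
- by have := bound [:: i] isT; rewrite big_seq1; move: (deg_i i); lia.
- have := bound [:: a; b]; rewrite /= inE ab big_cons big_seq1 => /(_ isT).
  by move: deg_ab; lia.
- by have := bound [:: z] isT; rewrite big_seq1; move: deg_z; lia.
Qed.

End WLPGenerators.

Section Witnesses.
Variables (F : fieldType) (n' d : nat).
Local Notation x k := (@inord n' k).
Local Open Scope nat_scope.

Lemma inord_eq k l : k <= n' -> l <= n' -> (x k == x l) = (k == l).
Proof. by move=> k_le l_le; rewrite -val_eqE /= !inordK. Qed.

Definition diffs5 : seq ('I_n'.+1 * 'I_n'.+1 * nat) :=
  [:: (x 0, x 1, d.-1); (x 2, x 3, d - 2); (x 2, x 4, 1); (x 3, x 4, 1)].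

Definition diffs6 : seq ('I_n'.+1 * 'I_n'.+1 * nat) :=
  [:: (x 0, x 1, d.-1); (x 2, x 3, d.-1); (x 4, x 5, 1)].

Lemma apolar_witness_inord s : 2 <= n' -> 2 <= d ->
  all (fun t => t.1.1 != t.1.2) s -> \sum_(t <- s) t.2 = (2 * d - 2).+1 ->
  (forall k, k <= n' -> diff_prod_deg [:: x k] s < d) ->
  diff_prod_deg [:: x 0; x 1] s < d -> diff_prod_deg [:: x n'] s < d.-1 ->
  apolar_witness (wlp_gens d (x 0) (x 1) (x n')) (2 * d - 2) (diff_prod F s).
Proof.
move=> n'_ge2 d_ge2 s_neq deg_s deg_k.
apply: diff_prod_apolar_witness => // [|||i]; try by rewrite inord_eq //; lia.
by rewrite -(inord_val i) deg_k // -ltnS.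
Qed.

Lemma apolar_witness_diffs5 : 4 <= n' -> 4 <= d ->
  apolar_witness (wlp_gens d (x 0) (x 1) (x n')) (2 * d - 2) (diff_prod F diffs5).
Proof.
move=> n'_ge4 d_ge4; apply: apolar_witness_inord => [||||k k_le||];
  by rewrite /diff_prod_deg ?big_cons ?big_nil /= ?inE ?inord_eq //; lia.
Qed.

Lemma apolar_witness_diffs6 : 5 <= n' /\ 3 <= d \/ 6 <= n' /\ 2 <= d ->
  apolar_witness (wlp_gens d (x 0) (x 1) (x n')) (2 * d - 2) (diff_prod F diffs6).
Proof.
move=> n'd; apply: apolar_witness_inord => [||||k k_le||];
  by rewrite /diff_prod_deg ?big_cons ?big_nil /= ?inE ?inord_eq //; lia.
Qed.

End Witnesses.

Theorem lemma4p5 (F : fieldType) (n d : nat) :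
  [pchar F] =i pred0 ->
  [\/ (5 <= n /\ 4 <= d)%N, (6 <= n /\ 3 <= d)%N | (7 <= n /\ 2 <= d)%N] ->
  exists gens : seq 'X_{1..n},
    [/\ size gens = (2 * n - 2)%N,
        all (fun m => mdeg m == d) gens,
        minimal_gens F gens,
        artinian_quot F gens
      & fails_WLP_in F gens (2 * d - 2)].
Proof.
move=> char0 n_d; have [d_ge2 n_ge5] : (2 <= d /\ 5 <= n)%N by case: n_d => -[]; lia.
case: n n_d n_ge5 => // n' n_d n_ge5.
pose a : 'I_n'.+1 := inord 0; pose b : 'I_n'.+1 := inord 1; pose z : 'I_n'.+1 := inord n'.
have [ab az bz] : [/\ a != b, a != z & b != z] by split; rewrite inord_eq //; lia.
have [P witness] : exists P : {mpoly F[n'.+1]}, apolar_witness (wlp_gens d a b z) (2 * d - 2) P.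
  have [d_ge4|d_lt4] := leqP 4 d.
    by exists (diff_prod F (diffs5 n' d)); apply: apolar_witness_diffs5; lia.
  by exists (diff_prod F (diffs6 n' d)); apply: apolar_witness_diffs6; case: n_d => -[]; lia.
exists (wlp_gens d a b z); split.
- exact: size_wlp_gens.
- exact: mdeg_wlp_gens.
- exact: minimal_gens_homog (uniq_wlp_gens _ _ _ _) (mdeg_wlp_gens _ _ _ _).
- exact: artinian_pure_powers (pure_power_wlp_gens d a b z).
split; first exact: wlp_gens_not_injective.
exact: apolar_not_surjective char0 witness.
Qed.
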